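(* If $\mathscr{S}$ is a relaxed scenario, then $G_{=}(\mathscr{S})$ does not contain an induced path on six vertices.
   Context: All trees are planted phylogenetic trees: a tree $T$ has a distinguished vertex $0_T$ of degree $1$ whose unique neighbor $\rho_T$ is the root, and every vertex other than $0_T$ and the leaves $L(T)$ has at least two children. For $x,y\in V(T)$ write $y\preceq_T x$ if $x$ lies on the path from $0_T$ to $y$; edges are written $uv$ with $v\prec_T u$. $\mathrm{lca}_T$ denotes the last common ancestor. A time map for $T$ is $\tau_T\colon V(T)\to\mathbb{R}$ with $\tau_T(x)<\tau_T(y)$ whenever $x\prec_T y$. A relaxed scenario $\mathscr{S}=(T,S,\sigma,\mu,\tau_T,\tau_S)$ consists of a gene tree $T$ with time map $\tau_T$, a species tree $S$ with time map $\tau_S$, a map $\sigma\colon L(T)\to M$ with $M\subseteq L(S)$, and a map $\mu\colon V(T)\to V(S)\cup E(S)$ such that (S0) $\mu(x)=0_S$ iff $x=0_T$; (S1) $\mu(x)\in L(S)$ iff $x\in L(T)$, in which case $\mu(x)=\sigma(x)$; (S2) if $\mu(x)\in V(S)$ then $\tau_S(\mu(x))=\tau_T(x)$; (S3) if $\mu(x)=uv\in E(S)$ then $\tau_S(v)<\tau_T(x)<\tau_S(u)$. The EDT graph $G_{=}(\mathscr{S})$ has vertex set $L(T)$ and an edge $xy$ ($x\ne y$) iff $\tau_T(\mathrm{lca}_T(x,y))=\tau_S(\mathrm{lca}_S(\sigma(x),\sigma(y)))$. *)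

From Stdlib Require Import Reals.
From mathcomp Require Import all_boot.

Set Implicit Arguments.
Unset Strict Implicit.
Unset Printing Implicit Defensive.

(* A finite rooted tree on a finType V is given by a parent map [par]
   and the planting vertex [z] (= 0_T) with [par z = z]; every vertex
   reaches [z] by iterating [par]. *)

Section Trees.
Variables (V : finType) (par : V -> V) (z : V).

Definition child (v u : V) : bool := (par v == u) && (v != z).

Definition is_edge (u v : V) : bool := child v u.

Definition leaf (v : V) : bool := (v != z) && [forall w, ~~ child w v].

(* y <=_T x : x lies on the path from 0_T to y *)
Definition anc (x y : V) : Prop := exists k, iter k par y = x.

Definition sanc (x y : V) : Prop := anc x y /\ x <> y.

Definition is_lca (x y a : V) : Prop :=
  anc a x /\ anc a y /\ (forall b, anc b x -> anc b y -> anc b a).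

Definition planted_phylo_tree : Prop :=
  par z = z /\
  (forall v, exists k, iter k par v = z) /\
  #|[set w | child w z]| = 1 /\
  (forall v, v != z -> ~~ leaf v -> 2 <= #|[set w | child w v]|).

Definition time_map (tau : V -> R) : Prop :=
  forall x y, sanc y x -> Rlt (tau x) (tau y).

End Trees.

(* Targets of the reconciliation map mu : V(T) -> V(S) \cup E(S). *)
Inductive vert_or_edge (VS : Type) : Type :=
  | MVert of VS
  | MEdge of VS & VS.  (* MEdge u v stands for the edge uv, v child of u *)

Arguments MVert {VS} _.
Arguments MEdge {VS} _ _.

Definition relaxed_scenario (VT VS : finType)
  (parT : VT -> VT) (zT : VT) (parS : VS -> VS) (zS : VS)
  (sigma : VT -> VS) (mu : VT -> vert_or_edge VS)
  (tauT : VT -> R) (tauS : VS -> R) : Prop :=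
  planted_phylo_tree parT zT /\ planted_phylo_tree parS zS /\
  time_map parT tauT /\ time_map parS tauS /\
  (forall x, leaf parT zT x -> leaf parS zS (sigma x)) /\
  (forall x u v, mu x = MEdge u v -> is_edge parS zS u v) /\
  (forall x, mu x = MVert zS <-> x = zT) /\
  (forall x, (exists v, mu x = MVert v /\ leaf parS zS v) <-> leaf parT zT x) /\
  (forall x, leaf parT zT x -> mu x = MVert (sigma x)) /\
  (forall x v, mu x = MVert v -> tauS v = tauT x) /\
  (forall x u v, mu x = MEdge u v -> Rlt (tauS v) (tauT x) /\ Rlt (tauT x) (tauS u)).

Definition edt_edge (VT VS : finType)
  (parT : VT -> VT) (parS : VS -> VS) (sigma : VT -> VS)
  (tauT : VT -> R) (tauS : VS -> R) (x y : VT) : Prop :=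
  x <> y /\
  exists a b, is_lca parT x y a /\ is_lca parS (sigma x) (sigma y) b /\
              tauT a = tauS b.

Definition has_induced_P6 (VT : finType) (isv : VT -> bool)
  (adj : VT -> VT -> Prop) : Prop :=
  exists a : 'I_6 -> VT,
    injective a /\ (forall i, isv (a i)) /\
    (forall i j : 'I_6, adj (a i) (a j) <-> (i.+1 == j :> nat) || (j.+1 == i :> nat)).

(* The time of the last common ancestor, d_T(x, y) = tau_T(lca_T(x, y)), is an
   ultrametric on the leaves of T, and likewise d_S(x, y) = tau_S(lca_S(sigma x,
   sigma y)); xy is an edge of G_= exactly when d_T and d_S agree on it.
   On an induced path p0 ... p5, the isosceles property of ultrametrics forces all
   five path edges to have one common value e in both d_T and d_S.  Every chord
   then has value at most e in both but not the same value, so it lies in one of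
   the relations "d_T < e", "d_S < e".  These are partial equivalence relations
   containing no path edge, and a short chase through the chords of a six-vertex
   path shows that two such relations cannot cover all of them. *)

From Stdlib Require Import Reals Lra Wf_nat Classical ClassicalEpsilon RelationClasses.
From mathcomp Require Import all_boot zify.

Set Implicit Arguments.
Unset Strict Implicit.
Unset Printing Implicit Defensive.

Lemma induced_P6_path (V : finType) (isv : V -> bool) (adj : V -> V -> Prop) :
  has_induced_P6 isv adj ->
  exists p : nat -> V, (forall i, i < 5 -> adj (p i) (p i.+1)) /\
    (forall i j, i.+1 < j <= 5 -> p i <> p j /\ ~ adj (p i) (p j)).
Proof.
move=> [a [inj_a [_ adj_a]]]; exists (fun k => a (inord k)).
split=> [i lt_i5 | i j lt_ij].
  by apply/adj_a; rewrite !inordK ?eqxx //; lia.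
have [lt_i6 lt_j6] : i < 6 /\ j < 6 by lia.
split=> [/inj_a/(congr1 (@nat_of_ord 6)) | /adj_a]; rewrite !inordK //; lia.
Qed.

Section PartialEquivalence.
Variables (T : Type) (R : T -> T -> Prop).
Context {per : PER R}.

Lemma PER_src x y w : R x y -> R x w -> R y w.
Proof. by move=> xy; apply: (PER_Transitive y x w); apply: PER_Symmetric. Qed.

Lemma PER_tgt x y w : R x w -> R y w -> R x y.
Proof. by move=> xw yw; apply: (PER_Transitive x w y) => //; apply: PER_Symmetric. Qed.

End PartialEquivalence.

Lemma PERs_no_induced_P6 (T : Type) (R1 R2 : T -> T -> Prop) (p : nat -> T) :
  PER R1 -> PER R2 ->
  (forall i, i < 5 -> ~ R1 (p i) (p i.+1) /\ ~ R2 (p i) (p i.+1)) ->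
  (forall i j, i.+1 < j <= 5 -> R1 (p i) (p j) \/ R2 (p i) (p j)) ->
  False.
Proof.
wlog r02 : R1 R2 / R1 (p 0) (p 2) => [gen PR1 PR2 path chord | PR1 PR2 path chord].
  have [r02 | r02] := chord 0 2 isT; first exact: (gen R1 R2).
  apply: (gen R2 R1) => // [i /path [] // | i j /chord []]; by [right | left].
have [no1 no2] : (forall i, i < 5 -> ~ R1 (p i) (p i.+1)) /\
                 (forall i, i < 5 -> ~ R2 (p i) (p i.+1)).
  by split=> i /path [].
(* Each chord in turn is forced into one relation: in the other it would join
   two consecutive vertices through a previously placed chord. *)
have r03 : R2 (p 0) (p 3).
  by have [r03|//] := chord 0 3 isT; case: (no1 2 isT); apply: PER_src r02 r03.
have r13 : R1 (p 1) (p 3).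
  by have [//|r13] := chord 1 3 isT; case: (no2 0 isT); apply: PER_tgt r03 r13.
have r14 : R2 (p 1) (p 4).
  by have [r14|//] := chord 1 4 isT; case: (no1 3 isT); apply: PER_src r13 r14.
have r24 : R1 (p 2) (p 4).
  by have [//|r24] := chord 2 4 isT; case: (no2 1 isT); apply: PER_tgt r14 r24.
have r15 : R1 (p 1) (p 5).
  by have [//|r15] := chord 1 5 isT; case: (no2 4 isT); apply: PER_src r14 r15.
have r05 : R2 (p 0) (p 5).
  by have [r05|//] := chord 0 5 isT; case: (no1 0 isT); apply: PER_tgt r05 r15.
have [r25|r25] := chord 2 5 isT.
- by case: (no1 4 isT); apply: PER_src r24 r25.
- by case: (no2 2 isT); apply: PER_src (PER_tgt r05 r25) r03.
Qed.

Local Open Scope R_scope.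

(* The diagonal is unconstrained: for the lca time, d x x is the time of x. *)
Definition ultrametric (T : Type) (d : T -> T -> R) : Prop :=
  (forall x y, d x y = d y x) /\ (forall x y w, d x w <= Rmax (d x y) (d y w)).

Section Ultrametric.
Variables (T : Type) (d : T -> T -> R).
Hypothesis ud : ultrametric d.

Lemma ultrametric_isosceles x y w : d x y < d y w -> d x w = d y w.
Proof.
have [dsym dmax] := ud; move=> lt_xy_yw; apply: Rle_antisym.
  by rewrite -(Rmax_right (d x y) (d y w)); [apply: dmax | apply: Rlt_le].
apply: Rnot_lt_le => lt_xw_yw.
have := dmax y x w; have := Rmax_lub_lt _ _ _ lt_xy_yw lt_xw_yw; rewrite dsym; lra.
Qed.

Lemma ultrametric_ball_PER e : PER (fun x y => d x y < e).
Proof.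
have [dsym dmax] := ud; split=> [x y | x y w] /=; first by rewrite dsym.
by move=> lt_xy lt_yw; apply: Rle_lt_trans (dmax x y w) _; apply: Rmax_lub_lt.
Qed.

Lemma ultrametric_path_le (p : nat -> T) n e :
  (forall i, (i < n)%N -> d (p i) (p i.+1) <= e) ->
  forall i j, (i < j <= n)%N -> d (p i) (p j) <= e.
Proof.
move=> steps i; elim=> [|j IH] //; rewrite ltnS => /andP[le_ij lt_jn].
have step := steps j lt_jn.
case: (ltngtP i j) le_ij => // [lt_ij _ | -> _ //].
apply: Rle_trans (proj2 ud _ (p j) _) _; apply: Rmax_lub => //.
by apply: IH; rewrite lt_ij ltnW.
Qed.

Lemma ultrametric_comp (U : Type) (f : U -> T) : ultrametric (fun x y => d (f x) (f y)).
Proof. by have [dsym dmax] := ud; split=> *; [apply: dsym | apply: dmax]. Qed.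

End Ultrametric.

Section Agreement.
Variables (T : Type) (A B : T -> T -> R).
Hypotheses (uA : ultrametric A) (uB : ultrametric B).

Lemma agree_isosceles x y w :
  A x y = B x y -> A y w = B y w -> A x y < A y w -> A x w = B x w.
Proof.
move=> agree_xy agree_yw lt_A; rewrite (ultrametric_isosceles uA lt_A) agree_yw.
by apply/esym/(ultrametric_isosceles uB); rewrite -agree_xy -agree_yw.
Qed.

Lemma agree_path_level x y w :
  A x y = B x y -> A y w = B y w -> A x w <> B x w -> A x y = A y w.
Proof.
have [symA _] := uA; have [symB _] := uB.
move=> agree_xy agree_yw disagree_xw.
case: (Rtotal_order (A x y) (A y w)) => [lt_A | [// | gt_A]]; case: disagree_xw.
  exact: agree_isosceles lt_A.
rewrite symA symB; apply: (@agree_isosceles w y x).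
- by rewrite symA symB.
- by rewrite symA symB.
- by rewrite (symA w y) (symA y x).
Qed.

Lemma agreement_graph_no_induced_P6 (p : nat -> T) :
  (forall i, (i < 5)%N -> A (p i) (p i.+1) = B (p i) (p i.+1)) ->
  (forall i j, (i.+1 < j <= 5)%N -> A (p i) (p j) <> B (p i) (p j)) ->
  False.
Proof.
move=> agree disagree; set e := A (p 0%N) (p 1%N).
have levelA i : (i < 5)%N -> A (p i) (p i.+1) = e.
  elim: i => [//| i IH lt_i5]; rewrite -IH ?(ltnW lt_i5) //.
  symmetry; apply: agree_path_level; first exact/agree/ltnW.
  - exact: agree.
  - by apply: disagree; rewrite ltnSn.
have levelB i : (i < 5)%N -> B (p i) (p i.+1) = e by move=> lt_i5; rewrite -agree // levelA.
have leA := ultrametric_path_le uA (fun i lt_i5 => Req_le _ _ (levelA i lt_i5)).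
have leB := ultrametric_path_le uB (fun i lt_i5 => Req_le _ _ (levelB i lt_i5)).
apply: (PERs_no_induced_P6 (p := p) (ultrametric_ball_PER uA e) (ultrametric_ball_PER uB e)).
  by move=> i lt_i5; rewrite levelA // levelB //; split; apply: Rlt_irrefl.
move=> i j /andP[lt_ij le_j5].
have ij : (i < j <= 5)%N by rewrite ltnW.
case: (Rle_lt_or_eq_dec _ _ (leA i j ij)) => [| eqA]; first by left.
case: (Rle_lt_or_eq_dec _ _ (leB i j ij)) => [| eqB]; first by right.
by case: (disagree i j); rewrite ?lt_ij // eqA eqB.
Qed.

End Agreement.

Section RootedTree.
Variables (V : finType) (par : V -> V).

Lemma anc_trans a b c : anc par a b -> anc par b c -> anc par a c.
Proof. by move=> [m <-] [k <-]; exists (m + k)%N; rewrite iterD. Qed.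

Lemma anc_iter x k m : (k <= m)%N -> anc par (iter m par x) (iter k par x).
Proof. by move=> le_km; exists (m - k)%N; rewrite -iterD subnK. Qed.

Lemma anc_total x a b : anc par a x -> anc par b x -> anc par a b \/ anc par b a.
Proof.
move=> [k <-] [m <-]; case: (leqP k m) => [le_km | /ltnW le_mk].
- by right; apply: anc_iter.
- by left; apply: anc_iter.
Qed.

Definition lca (x y : V) : V := epsilon (inhabits x) (is_lca par x y).

Variable z : V.
Hypothesis reach : forall v, exists k, iter k par v = z.

Lemma lca_exists x y : exists a, is_lca par x y a.
Proof.
pose common k := anc par (iter k par x) y.
have [kz xz] := reach x.
have [k [[common_k least_k] _]] : has_unique_least_element le common.
  apply: dec_inh_nat_subset_has_unique_least_element => [n|]; first exact: classic.
  by exists kz; rewrite /common xz; have [m ym] := reach y; exists m.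
exists (iter k par x); split; first by exists k.
split=> [|b [i xb] yb]; first exact: common_k.
have /leP le_ki : (k <= i)%coq_nat by apply: least_k; rewrite /common xb.
by rewrite -xb; apply: anc_iter.
Qed.

Lemma lca_spec x y : is_lca par x y (lca x y).
Proof. exact: epsilon_spec (lca_exists x y). Qed.

Variable tau : V -> R.
Hypothesis time : time_map par tau.

Lemma time_anc a b : anc par a b -> tau b <= tau a.
Proof.
move=> ab; case: (eqVneq a b) => [-> | /eqP neq_ab]; first exact: Rle_refl.
exact/Rlt_le/time.
Qed.

Lemma anc_antisym a b : anc par a b -> anc par b a -> a = b.
Proof.
move=> ab ba; apply: NNPP => neq_ab.
have := time (conj ab neq_ab); have := time_anc ba; lra.
Qed.

Lemma is_lca_unique x y a : is_lca par x y a -> a = lca x y.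
Proof.
move=> [xa [ya a_min]]; have [xl [yl l_min]] := lca_spec x y.
by apply: anc_antisym; [apply: l_min | apply: a_min].
Qed.

Lemma lca_sym x y : lca x y = lca y x.
Proof.
have [xl [yl l_min]] := lca_spec x y.
by apply: is_lca_unique; split=> //; split=> // b yb xb; apply: l_min.
Qed.

Lemma lca_time_ultrametric : ultrametric (fun x y => tau (lca x y)).
Proof.
split=> [x y | x y w]; first by rewrite lca_sym.
have [lx [ly _]] := lca_spec x y.
have [ly' [lw _]] := lca_spec y w.
have [_ [_ l_min]] := lca_spec x w.
case: (anc_total ly ly') => [up | up].
- apply: Rle_trans (Rmax_l _ _); apply/time_anc/l_min => //.
  exact: anc_trans up lw.
- apply: Rle_trans (Rmax_r _ _); apply/time_anc/l_min => //.
  exact: anc_trans up lx.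
Qed.

End RootedTree.

Lemma edt_edge_lca (VT VS : finType) (parT : VT -> VT) (zT : VT)
  (parS : VS -> VS) (zS : VS) (sigma : VT -> VS)
  (tauT : VT -> R) (tauS : VS -> R) x y :
  (forall v, exists k, iter k parT v = zT) -> time_map parT tauT ->
  (forall v, exists k, iter k parS v = zS) -> time_map parS tauS ->
  edt_edge parT parS sigma tauT tauS x y <->
  x <> y /\ tauT (lca parT x y) = tauS (lca parS (sigma x) (sigma y)).
Proof.
move=> reachT timeT reachS timeS.
split=> [[neq_xy [a [b [lca_a [lca_b eq_ab]]]]] | [neq_xy eq_lca]].
  by rewrite -(is_lca_unique reachT timeT lca_a) -(is_lca_unique reachS timeS lca_b).
split=> //; exists (lca parT x y), (lca parS (sigma x) (sigma y)).
have lcaT := lca_spec reachT x y; have lcaS := lca_spec reachS (sigma x) (sigma y).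
by split; [|split].
Qed.

Theorem lemma22 (VT VS : finType)
  (parT : VT -> VT) (zT : VT) (parS : VS -> VS) (zS : VS)
  (sigma : VT -> VS) (mu : VT -> vert_or_edge VS)
  (tauT : VT -> R) (tauS : VS -> R) :
  relaxed_scenario parT zT parS zS sigma mu tauT tauS ->
  ~ has_induced_P6 (leaf parT zT) (edt_edge parT parS sigma tauT tauS).
Proof.
move=> [[_ [reachT _]] [[_ [reachS _]] [timeT [timeS _]]]].
move=> /induced_P6_path [p [path chord]].
have edgeE := edt_edge_lca sigma _ _ reachT timeT reachS timeS.
apply: (agreement_graph_no_induced_P6 (lca_time_ultrametric reachT timeT)
          (ultrametric_comp (lca_time_ultrametric reachS timeS) sigma) (p := p)).
- by move=> i /path /edgeE [].
- by move=> i j /chord [neq_ij not_edge] agree_ij; apply/not_edge/edgeE.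
Qed.
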